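(* Let $t\ge 2$ be an integer and let $G_1,G_2,\dots,G_t$ be cyclically orderable graphs with $|V(G_1)|=|V(G_2)|=\cdots=|V(G_t)|$ and $|E(G_1)|=|E(G_2)|=\cdots=|E(G_t)|$. Then any series composition $G_1\oplus G_2\oplus\cdots\oplus G_t$ is cyclically orderable.
   Context: A cyclic base ordering (CBO) of a connected graph $G$ is a bijection $\mathcal{O}:E(G)\to\{1,\dots,|E(G)|\}$ such that for every $i\in\{1,\dots,|E(G)|\}$ the edges $\mathcal{O}^{-1}(i),\dots,\mathcal{O}^{-1}(i+|V(G)|-2)$ (indices taken cyclically modulo $|E(G)|$) induce a spanning tree of $G$; $G$ is cyclically orderable if it has a CBO. Given graphs $G$ and $H$ (vertex-disjoint) with $u\in V(G)$ and $v\in V(H)$, the series composition $G\oplus H$ is the graph obtained from the disjoint union of $G$ and $H$ by identifying $u$ and $v$ into a single vertex (the glued vertices may be chosen arbitrarily). $G_1\oplus G_2\oplus\cdots\oplus G_t$ denotes an iterated series composition $(\cdots((G_1\oplus G_2)\oplus G_3)\cdots)\oplus G_t$ with arbitrary choices of glued vertices at each step. *)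

From mathcomp Require Import all_boot.
Set Implicit Arguments. Unset Strict Implicit. Unset Printing Implicit Defensive.

(* A finite graph: vertex type, edge type, and the (unordered) pair of
   endpoints of each edge, given as an ordered pair. *)
Record graph := Graph {
  gV : finType;
  gE : finType;
  gends : gE -> gV * gV
}.

Definition adjF (G : graph) (F : {set gE G}) : rel (gV G) :=
  fun x y => [exists e in F, (gends e == (x, y)) || (gends e == (y, x))].

Definition connectedF (G : graph) (F : {set gE G}) : Prop :=
  forall x y : gV G, connect (adjF F) x y.

Definition connected_graph (G : graph) : Prop := connectedF [set: gE G].

(* F is (the edge set of) a spanning tree: (V(G),F) is connected and has
   no cycle, i.e. every edge of F is a bridge of (V(G),F) (a loop is never
   a bridge). *)
Definition spanning_tree (G : graph) (F : {set gE G}) : Prop :=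
  connectedF F /\
  forall e, e \in F -> ~~ connect (adjF (F :\ e)) (gends e).1 (gends e).2.

(* Cyclic base ordering, with positions 0..m-1 instead of 1..m
   (m = |E(G)|, n = |V(G)|): the window starting at i is the set of edges
   whose position lies in {i, i+1, ..., i+n-2} modulo m. *)
Definition window (G : graph) (O : gE G -> 'I_#|gE G|) (i : 'I_#|gE G|)
  : {set gE G} :=
  [set e | ((O e + #|gE G| - i) %% #|gE G| < #|gV G|.-1)%N].

Definition is_CBO (G : graph) (O : gE G -> 'I_#|gE G|) : Prop :=
  bijective O /\ forall i, spanning_tree (window O i).

Definition cyclically_orderable (G : graph) : Prop :=
  connected_graph G /\ exists O : gE G -> 'I_#|gE G|, is_CBO O.

(* Series composition G (+) H identifying u in G with v in H.
   Vertices: V(G) plus V(H) minus v; edges: E(G) + E(H). *)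
Definition sc_V (G H : graph) (v : gV H) : finType :=
  (gV G + {y : gV H | y != v})%type.

Definition sc_map (G H : graph) (u : gV G) (v : gV H) (x : gV H)
  : sc_V G v :=
  match @insub (gV H) (fun y => y != v) {y : gV H | y != v} x with
  | Some y => inr y
  | None => inl u
  end.

Definition sc_ends (G H : graph) (u : gV G) (v : gV H)
  (e : (gE G + gE H)%type) : sc_V G v * sc_V G v :=
  match e with
  | inl e1 => (inl (gends e1).1, inl (gends e1).2)
  | inr e2 => (@sc_map G H u v (gends e2).1, @sc_map G H u v (gends e2).2)
  end.

Definition series (G H : graph) (u : gV G) (v : gV H) : graph :=
  @Graph (sc_V G v) (gE G + gE H)%type (@sc_ends G H u v).

(* iter_series Gs n K : K is some iterated series composition
   (..((Gs 0 (+) Gs 1) (+) Gs 2) ..) (+) Gs (n-1), with arbitrary choices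
   of the glued vertices at each step. *)
Inductive iter_series (Gs : nat -> graph) : nat -> graph -> Prop :=
| iter_series_1 : iter_series Gs 1 (Gs 0)
| iter_series_S : forall n K (u : gV K) (v : gV (Gs n)),
    iter_series Gs n K -> iter_series Gs n.+1 (@series K (Gs n) u v).

From mathcomp Require Import all_boot zify.
Set Implicit Arguments. Unset Strict Implicit. Unset Printing Implicit Defensive.

(* Generalize a cyclic base ordering to injective positions P : E -> nat below
   a period M such that every cyclic window of length L is a spanning tree.
   If K has such positions for (k m, k r) and H for (m, r), cut the positions
   of K into blocks of k consecutive ones and insert the j-th edge of H right
   after the j-th block.  A window of length (k+1) r of this interleaving meets
   E(K) in a window of length k r and E(H) in a window of length r, so in
   spanning trees of K and H; glued at one vertex they form a spanning tree of
   the series composition.  Induction along the composition with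
   m = |E(G_i)| and r = |V(G_i)| - 1 gives the theorem. *)

Lemma adjF_sym (G : graph) (F : {set gE G}) : symmetric (adjF F).
Proof.
by move=> x y; apply/existsP/existsP => -[e /andP[eF He]]; exists e; rewrite eF orbC.
Qed.

Lemma connect_adjF_edge (G : graph) (F : {set gE G}) e :
  e \in F -> connect (adjF F) (gends e).1 (gends e).2.
Proof.
by move=> eF; apply/connect1/existsP; exists e; rewrite eF -surjective_pairing eqxx.
Qed.

Lemma connect_adjF_homo (G G' : graph) (F : {set gE G}) (F' : {set gE G'})
    (h : gV G -> gV G') :
  (forall e, e \in F -> connect (adjF F') (h (gends e).1) (h (gends e).2)) ->
  forall x y, connect (adjF F) x y -> connect (adjF F') (h x) (h y).
Proof.
move=> hF x y /connectP[p]; elim: p x => [|z p IH] x /=; first by move=> _ ->.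
case/andP=> /existsP[e /andP[eF /orP[]/eqP ends]] zp yl.
all: apply: connect_trans (IH _ zp yl); have := hF e eF; rewrite ends //.
by rewrite (sym_connect_sym (adjF_sym F')).
Qed.

Section SeriesComposition.

Variables (K H : graph) (u : gV K) (v : gV H).

Definition sc_projl (x : sc_V K v) : gV K :=
  if x is inl a then a else u.

Definition sc_projr (x : sc_V K v) : gV H :=
  if x is inr y then val y else v.

Lemma sc_map_v : sc_map u v v = inl u.
Proof. by rewrite /sc_map insubF // eqxx. Qed.

Lemma sc_map_val (y : {y : gV H | y != v}) : sc_map u v (val y) = inr y.
Proof. by rewrite /sc_map valK. Qed.

Lemma sc_projl_map z : sc_projl (sc_map u v z) = u.
Proof. by rewrite /sc_map; case: insubP. Qed.

Lemma sc_projr_map z : sc_projr (sc_map u v z) = z.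
Proof. by rewrite /sc_map; case: insubP => [y _ <- //|/negPn/eqP ->]. Qed.

Lemma connectedF_series (F : {set gE (series u v)}) :
  connectedF [set e | inl e \in F] -> connectedF [set e | inr e \in F] ->
  connectedF F.
Proof.
move=> cK cH.
have to_u x : connect (adjF F) x (inl u).
  case: x => [a|y].
  - apply: (@connect_adjF_homo K (series u v) _ F inl _ _ _ (cK a u)) => e.
    by rewrite inE => /connect_adjF_edge.
  - rewrite -sc_map_val -sc_map_v.
    apply: (@connect_adjF_homo H (series u v) _ F (sc_map u v) _ _ _ (cH _ v)) => e.
    by rewrite inE => /connect_adjF_edge.
move=> x y; apply: connect_trans (to_u x) _.
by rewrite (sym_connect_sym (adjF_sym F)).
Qed.

Lemma spanning_tree_series (F : {set gE (series u v)}) :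
  spanning_tree [set e | inl e \in F] -> spanning_tree [set e | inr e \in F] ->
  spanning_tree F.
Proof.
move=> [cK bK] [cH bH]; split; first exact: connectedF_series.
case=> e eF; apply/negP => /= C.
- have := bK e; rewrite inE => /(_ eF)/negP; apply.
  apply: (@connect_adjF_homo (series u v) K _ _ sc_projl _ _ _ C).
  case=> f; rewrite !inE => /andP[fe fF] /=; last by rewrite !sc_projl_map.
  by apply: connect_adjF_edge; rewrite !inE fF andbT.
- have := bH e; rewrite inE => /(_ eF)/negP; apply.
  rewrite -[(gends e).1]sc_projr_map -[(gends e).2]sc_projr_map.
  apply: (@connect_adjF_homo (series u v) H _ _ sc_projr _ _ _ C).
  case=> f; rewrite !inE => /andP[fe fF] /=; first exact: connect0.
  by rewrite !sc_projr_map; apply: connect_adjF_edge; rewrite !inE fF andbT.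
Qed.

Lemma card_series_E : #|gE (series u v)| = #|gE K| + #|gE H|.
Proof. exact: card_sum. Qed.

Lemma card_series_V : #|gV (series u v)| = #|gV K| + #|gV H|.-1.
Proof.
rewrite /= /sc_V card_sum card_sig -(cardC1 v).
by congr (_ + _); apply: eq_card => y; rewrite !inE.
Qed.
End SeriesComposition.

Lemma leq_mulD_lex B x y a b : a <= B -> b < B ->
  (x * B + a <= y * B + b) = (x < y) || (x == y) && (a <= b).
Proof.
move=> aB bB; case: ltngtP => [xy|yx|->]; last by rewrite leq_add2l.
- have : x.+1 * B <= y * B by rewrite leq_mul2r xy orbT.
  rewrite mulSn; lia.
- have : y.+1 * B <= x * B by rewrite leq_mul2r yx orbT.
  rewrite mulSn; lia.
Qed.

Lemma ltn_mulD_lex B x y a b : a < B -> b <= B ->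
  (x * B + a < y * B + b) = (x < y) || (x == y) && (a < b).
Proof.
move=> aB bB; rewrite ltnNge leq_mulD_lex //.
by case: ltngtP; rewrite //= -ltnNge.
Qed.

Lemma mulD_lex_inj B x y a b : a < B -> b < B ->
  x * B + a = y * B + b -> x = y /\ a = b.
Proof.
move=> aB bB E.
move: (leq_mulD_lex x y (ltnW aB) bB) (leq_mulD_lex y x (ltnW bB) aB).
by rewrite E leqnn; lia.
Qed.

(* Membership is read on the unrolled line, so the start i need not be
   reduced modulo M. *)
Definition in_cwindow (M L i p : nat) : Prop := exists q, i <= p + q * M < i + L.

Lemma in_cwindow0 M L p : in_cwindow M L 0 p <-> p < L.
Proof. by split=> [[q /andP[_]]|pL]; [lia | exists 0; rewrite addn0]. Qed.

Lemma in_cwindow_modn M L i p : p < M ->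
  in_cwindow M L i p <-> in_cwindow M L (i %% M) p.
Proof.
move=> pM; have M0 : 0 < M by lia.
rewrite {1}(divn_eq i M); set a := i %/ M; have := ltn_pmod i M0.
split=> -[q Hq]; last by exists (q + a); rewrite mulnDl; lia.
have aq : a <= q.
  rewrite leqNgt; apply/negP => qa.
  have : q.+1 * M <= a * M by rewrite leq_mul2r qa orbT.
  rewrite mulSn; lia.
have : a * M <= q * M by rewrite leq_mul2r aq orbT.
by exists (q - a); rewrite mulnBl; lia.
Qed.

Lemma in_cwindowE M L i p : p < M ->
  in_cwindow M L i p <-> (p + M - i %% M) %% M < L.
Proof.
move=> pM; have M0 : 0 < M by lia.
rewrite in_cwindow_modn //; have := ltn_pmod i M0.
move: (i %% M) => j jM; case: (leqP j p) => jp.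
- rewrite -addnBAC // modnDr modn_small; last by lia.
  split=> [[[|q] Hq]|pL]; [lia | rewrite mulSn in Hq; lia | by exists 0; lia].
- rewrite modn_small; last by lia.
  split=> [[[|q] Hq]|pL]; [lia | rewrite mulSn in Hq; lia | by exists 1; lia].
Qed.

(* Leaves the gap (k+1) j + k after the j-th block of k positions. *)
Definition spread k p := p %/ k * k.+1 + p %% k.

Lemma mulnD_blockE B m x a q : x * B + a + q * (B * m) = (x + q * m) * B + a.
Proof. lia. Qed.

(* A start in a gap (digit s0 = k) is read in K as the start of the next
   block; the digit bound a <= B of leq_mulD_lex is what allows this. *)
Lemma in_cwindow_spread k m r i p : 0 < k ->
  in_cwindow (k.+1 * m) (k.+1 * r) i (spread k p) <->
  in_cwindow (k * m) (k * r) (i %/ k.+1 * k + i %% k.+1) p.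
Proof.
move=> k0; rewrite /spread [in X in _ <-> in_cwindow _ _ _ X](divn_eq p k).
rewrite [in X in in_cwindow _ _ X _ <-> _](divn_eq i k.+1).
have s0k : i %% k.+1 <= k by rewrite -ltnS ltn_pmod.
have sk := ltn_pmod p k0.
move: (i %/ k.+1) (i %% k.+1) (p %/ k) (p %% k) s0k sk => j0 s0 J s s0k sk.
have pt q :
    (j0 * k.+1 + s0 <= J * k.+1 + s + q * (k.+1 * m) < j0 * k.+1 + s0 + k.+1 * r)
  = (j0 * k + s0 <= J * k + s + q * (k * m) < j0 * k + s0 + k * r).
  have endE B : j0 * B + s0 + B * r = (j0 + r) * B + s0 by lia.
  rewrite !mulnD_blockE !endE !leq_mulD_lex ?ltn_mulD_lex //; lia.
by split=> -[q Hq]; exists q; rewrite ?pt // -pt.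
Qed.

Lemma in_cwindow_gap k m r i p :
  in_cwindow (k.+1 * m) (k.+1 * r) i (p * k.+1 + k) <->
  in_cwindow m r (i %/ k.+1) p.
Proof.
rewrite [in X in in_cwindow _ _ X _ <-> _](divn_eq i k.+1).
have s0k : i %% k.+1 <= k by rewrite -ltnS ltn_pmod.
move: (i %/ k.+1) (i %% k.+1) s0k => j0 s0 s0k.
have pt q :
    (j0 * k.+1 + s0 <= p * k.+1 + k + q * (k.+1 * m) < j0 * k.+1 + s0 + k.+1 * r)
  = (j0 <= p + q * m < j0 + r).
  have -> : j0 * k.+1 + s0 + k.+1 * r = (j0 + r) * k.+1 + s0 by lia.
  rewrite mulnD_blockE leq_mulD_lex ?ltn_mulD_lex //; lia.
by split=> -[q Hq]; exists q; rewrite ?pt // -pt.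
Qed.

Definition is_CBO_pos (G : graph) (M L : nat) (P : gE G -> nat) : Prop :=
  [/\ injective P, forall e, P e < M &
      forall i (F : {set gE G}),
        (forall e, e \in F <-> in_cwindow M L i (P e)) -> spanning_tree F].

Lemma cyclically_orderableP (G : graph) :
  cyclically_orderable G <-> exists P : gE G -> nat, is_CBO_pos #|gE G| #|gV G|.-1 P.
Proof.
split=> [[cG [O [bijO wO]]]|[P [injP ltP wP]]].
- exists (fun e => val (O e)); split=> [a b /val_inj/(bij_inj bijO) //|e|i F HF].
    exact: ltn_ord.
  have [M0|M0] := posnP #|gE G|.
    have noE (e : gE G) : False by have := ltn_ord (O e); rewrite {2}M0.
    have -> : F = setT by apply/setP => e; case: (noE e).
    by split=> // e; case: (noE e).
  have -> : F = window O (Ordinal (ltn_pmod i M0)).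
    apply/setP => e; have Ew := in_cwindowE #|gV G|.-1 i (ltn_ord (O e)).
    by rewrite inE; apply/idP/idP => [/HF/Ew | /Ew/HF].
  exact: wO.
- split.
    have [cF _] : spanning_tree [set e | P e < #|gV G|.-1].
      by apply: (wP 0) => e; rewrite inE in_cwindow0.
    move=> x y; apply: (@connect_adjF_homo G G _ _ id _ _ _ (cF x y)) => e _.
    exact/connect_adjF_edge/in_setT.
  exists (fun e => Ordinal (ltP e)); split.
    by apply: inj_card_bij; [move=> a b /(congr1 val)/injP | rewrite card_ord].
  move=> i; apply: (wP i) => e.
  by rewrite inE (in_cwindowE _ i (ltP e)) (modn_small (ltn_ord i)).
Qed.

Definition sc_pos (K H : graph) (u : gV K) (v : gV H) (k : nat)
    (PK : gE K -> nat) (PH : gE H -> nat) (e : gE (series u v)) : nat :=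
  match e with
  | inl e => spread k (PK e)
  | inr e => PH e * k.+1 + k
  end.

Lemma is_CBO_pos_series (K H : graph) (u : gV K) (v : gV H) k m r PK PH :
  is_CBO_pos (k * m) (k * r) PK -> is_CBO_pos m r PH ->
  is_CBO_pos (k.+1 * m) (k.+1 * r) (@sc_pos K H u v k PK PH).
Proof.
move=> [injK ltK wK] [injH ltH wH].
have k0 (e : gE K) : 0 < k.
  by move: (ltK e); rewrite lt0n; apply: contraTneq => ->.
have ltSk (e : gE K) : PK e %% k < k.+1 by rewrite ltnS ltnW // ltn_pmod ?(k0 e).
split.
- case=> a [] b /=.
  + move/mulD_lex_inj => /(_ (ltSk a) (ltSk b))[Eq Er].
    by rewrite (injK a b) // (divn_eq (PK a) k) Eq Er -divn_eq.
  + move/mulD_lex_inj => /(_ (ltSk a) (ltnSn k))[_].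
    by have := ltn_pmod (PK a) (k0 a); lia.
  + move/mulD_lex_inj => /(_ (ltnSn k) (ltSk b))[_].
    by have := ltn_pmod (PK b) (k0 b); lia.
  + by move/mulD_lex_inj => /(_ (ltnSn k) (ltnSn k))[/injH ->].
- rewrite mulnC -[m * k.+1]addn0.
  case=> e /=; rewrite ltn_mulD_lex ?ltn_pmod ?(k0 e) //.
    by rewrite ltn_divLR ?(k0 e) // mulnC ltK.
  by rewrite ltH.
move=> i F HF; apply: spanning_tree_series.
  apply: (wK (i %/ k.+1 * k + i %% k.+1)) => e.
  by rewrite inE HF -in_cwindow_spread ?(k0 e).
by apply: (wH (i %/ k.+1)) => e; rewrite inE HF -in_cwindow_gap.
Qed.

Lemma iter_series_CBO_pos (Gs : nat -> graph) m r n K : iter_series Gs n K ->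
  (forall i, i < n -> [/\ #|gE (Gs i)| = m, #|gV (Gs i)|.-1 = r &
                         exists P : gE (Gs i) -> nat, is_CBO_pos m r P]) ->
  [/\ #|gE K| = n * m, #|gV K|.-1 = n * r &
      exists P : gE K -> nat, is_CBO_pos (n * m) (n * r) P].
Proof.
elim=> {n K} [|n K u v _ IH] hyp; first by rewrite !mul1n; exact: hyp.
have [EK VK [PK cK]] := IH (fun i lt => hyp i (ltnW lt)).
have [EH VH [PH cH]] := hyp n (ltnSn n).
have K0 : 0 < #|gV K| by apply/card_gt0P; exists u.
split.
- by rewrite card_series_E EK EH mulSn addnC.
- by rewrite card_series_V VH mulSn; lia.
by exists (@sc_pos K _ u v n PK PH); apply: is_CBO_pos_series.
Qed.

Theorem mainTheorem4 (t : nat) (Gs : nat -> graph) (K : graph) :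
  (2 <= t)%N ->
  (forall i, (i < t)%N -> cyclically_orderable (Gs i)) ->
  (forall i, (i < t)%N -> #|gV (Gs i)| = #|gV (Gs 0)|) ->
  (forall i, (i < t)%N -> #|gE (Gs i)| = #|gE (Gs 0)|) ->
  iter_series Gs t K ->
  cyclically_orderable K.
Proof.
move=> _ COs EV EE IS.
have Gs_pos i : i < t ->
    [/\ #|gE (Gs i)| = #|gE (Gs 0)|, #|gV (Gs i)|.-1 = #|gV (Gs 0)|.-1 &
         exists P : gE (Gs i) -> nat, is_CBO_pos #|gE (Gs 0)| #|gV (Gs 0)|.-1 P].
  move=> it; rewrite -(EE i it) -(EV i it); split=> //; exact/cyclically_orderableP/COs.
have [EK VK PK] := iter_series_CBO_pos IS Gs_pos.
by apply/cyclically_orderableP; rewrite EK VK.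
Qed.
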